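(* Let $\mathbb W$ and $\mathbb W_i$ be as in the context. For $2\le i\ne j\le n$, the subgroup $\mathbb W_i$ is not conjugate to $\mathbb W_j$ in $\mathbb W$.
   Context: Fix an integer $n\ge 3$, pairwise distinct odd integers $m_1,\dots,m_l\ge 3$ and positive integers $k_1,\dots,k_l$ with $k_1+\cdots+k_l=n-1$. Partition $\{2,\dots,n\}$ into consecutive blocks $A_1=\{2,\dots,k_1+1\}$, $A_2=\{k_1+2,\dots,k_1+k_2+1\}$, …, $A_l$ (of sizes $k_1,\dots,k_l$), and put $t_i=m_j$ for $i\in A_j$. The star group is $\mathbb W=\langle w_1,\dots,w_n\mid w_j^2=1\ (1\le j\le n),\ (w_1w_i)^{t_i}=1\ (2\le i\le n)\rangle$. For $2\le i\le n$ let $\mathbb W_i=\langle w_1,w_i\rangle$. *)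

From mathcomp Require Import all_boot.
Set Implicit Arguments. Unset Strict Implicit. Unset Printing Implicit Defensive.

(* Generators w_1,...,w_n are encoded by 'I_n : the ordinal a stands for
   w_(a+1).  So ordinal 0 is w_1 and ordinal i (1 <= i < n) is w_(i+1). *)

(* Block labelling: [ms] = [m_1;...;m_l], [ks] = [k_1;...;k_l].
   [blockt ms ks p] is the m_j such that the p-th element (0-based) of
   {2,...,n} lies in the block A_j. *)
Fixpoint blockt (ms ks : seq nat) (p : nat) : nat :=
  match ms, ks with
  | m :: ms', k :: ks' => if p < k then m else blockt ms' ks' (p - k)
  | _, _ => 0
  end.

(* exponent t attached to generator a (0-based, a >= 1 corresponds to
   w_(a+1), i.e. to the element a+1 of {2,...,n}, at position a-1) *)
Definition tcox (ms ks : seq nat) (n : nat) (a : 'I_n) : nat :=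
  blockt ms ks (val a).-1.

Definition is_relator (ms ks : seq nat) (n : nat) (r : seq 'I_n) : Prop :=
  (exists s : 'I_n, r = [:: s; s]) \/
  (exists s0 i : 'I_n, val s0 = 0 /\ 0 < val i /\
     r = flatten (nseq (tcox ms ks i) [:: s0; i])).

(* Equality in the group given by the presentation: the congruence on
   words generated by the relators. *)
Inductive coxeq (ms ks : seq nat) (n : nat) : seq 'I_n -> seq 'I_n -> Prop :=
  | coxeq_refl u : coxeq ms ks u u
  | coxeq_sym u v : coxeq ms ks u v -> coxeq ms ks v u
  | coxeq_trans u v w : coxeq ms ks u v -> coxeq ms ks v w -> coxeq ms ks u w
  | coxeq_rel u v r : is_relator ms ks r -> coxeq ms ks (u ++ v) (u ++ r ++ v).

(* Membership of (the class of) word x in W_i = <w_1, w_i>. *)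
Definition inWi (ms ks : seq nat) (n : nat) (i : 'I_n) (x : seq 'I_n) : Prop :=
  exists y : seq 'I_n,
    all (fun a : 'I_n => (val a == 0) || (a == i)) y /\ coxeq ms ks x y.

(* Subgroups W_i and W_j are conjugate: g W_i g^-1 = W_j for some g.
   Since generators are involutions, the inverse of the word g is rev g. *)
Definition Wconj (ms ks : seq nat) (n : nat) (i j : 'I_n) : Prop :=
  exists g : seq 'I_n, forall x : seq 'I_n,
    inWi ms ks j x <-> inWi ms ks i (rev g ++ x ++ g).

(* Fix i <> j with w_i, w_j <> w_1 and put m = t_i, an odd
   integer >= 3.  The star group acts on Z/mZ by letting w_i act as the
   reflection x |-> 1 - x and every other generator as x |-> -x: the
   relators act trivially because w_1 w_i acts as x |-> x - 1, of order m,
   while w_1 w_k acts trivially for k <> i.  Hence equal words act equally.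
   Every element of W_j acts as +id or -id, but W_i contains the three
   pairwise different maps id, w_1 and w_i.  If g W_i g^-1 = W_j, then
   conjugation by the action of g sends w_1 and w_i into {id, -id}; it
   is injective and fixes id, so w_1 and w_i would both go to -id, hence
   be equal: a contradiction. *)

From mathcomp Require Import all_boot.
From mathcomp Require Import ssralg zmodp zify.
Import GRing.Theory.

Set Implicit Arguments. Unset Strict Implicit. Unset Printing Implicit Defensive.

Lemma blockt_in (ms ks : seq nat) (p : nat) :
  size ks = size ms -> p < sumn ks -> blockt ms ks p \in ms.
Proof.
elim: ms ks p => [|m ms IH] [|k ks] p //= [] hs hp.
rewrite inE; case: ltnP => hpk; first by rewrite eqxx.
by rewrite IH ?orbT // ltn_subLR.
Qed.

Lemma tcox_gt2 (n : nat) (ms ks : seq nat) (i : 'I_n) :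
  size ks = size ms -> all (fun m => odd m && (3 <= m)) ms ->
  sumn ks = n - 1 -> 0 < val i -> 2 < tcox ms ks i.
Proof.
move=> hsize hms hsum hi.
have /(allP hms) /andP [_ //] : tcox ms ks i \in ms.
apply: blockt_in => //; rewrite hsum.
by have := ltn_ord i; move: hi => /=; lia.
Qed.

Lemma conj_inj (T : Type) (phi psi f h : T -> T) : cancel phi psi ->
  (forall x, phi (f (psi x)) = phi (h (psi x))) -> f =1 h.
Proof. by move=> K H y; apply: (can_inj K); have := H (phi y); rewrite K. Qed.

Lemma cancel_rev (ms ks : seq nat) (n : nat) (g u v : seq 'I_n) :
  coxeq ms ks (u ++ rev g ++ g ++ v) (u ++ v).
Proof.
elim: g u v => [|a g IH] u v; first exact: coxeq_refl.
have -> : u ++ rev (a :: g) ++ (a :: g) ++ v =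
          (u ++ rev g) ++ [:: a; a] ++ (g ++ v).
  by rewrite rev_cons -cats1 -!catA.
apply: coxeq_trans (coxeq_sym (coxeq_rel _ _ _)) _; first by left; exists a.
by rewrite -catA; exact: IH.
Qed.

Lemma inWi_coxeq (ms ks : seq nat) (n : nat) (i : 'I_n) (z z' : seq 'I_n) :
  inWi ms ks i z -> coxeq ms ks z' z -> inWi ms ks i z'.
Proof. by move=> [y [hy hc]] h; exists y; split=> //; exact: coxeq_trans h hc. Qed.

Section Action.
Local Open Scope ring_scope.
Variables (m n : nat) (i : 'I_n).
Hypothesis hi : (0 < val i)%N.

Definition gen_act (a : 'I_n) (x : 'Z_m) : 'Z_m :=
  if a == i then 1 - x else - x.

Definition word_act (w : seq 'I_n) (x : 'Z_m) : 'Z_m := foldr gen_act x w.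

Definition is_sign (f : 'Z_m -> 'Z_m) : Prop := f =1 id \/ f =1 -%R.

Lemma word_act_cat (u v : seq 'I_n) (x : 'Z_m) :
  word_act (u ++ v) x = word_act u (word_act v x).
Proof. exact: foldr_cat. Qed.

Lemma gen_actK (a : 'I_n) : involutive (gen_act a).
Proof. by move=> x; rewrite /gen_act; case: (a == i); rewrite ?opprK // opprB addrC subrK. Qed.

Lemma word_act_revK (g : seq 'I_n) : cancel (word_act g) (word_act (rev g)).
Proof.
elim: g => [|a g IH] x //=.
by rewrite rev_cons -cats1 word_act_cat /= gen_actK IH.
Qed.

Lemma word_actK (g : seq 'I_n) : cancel (word_act (rev g)) (word_act g).
Proof. by move=> x; rewrite -{1}(revK g) word_act_revK. Qed.

Lemma gen_act_neq (a : 'I_n) : a != i -> gen_act a =1 -%R.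
Proof. by move=> /negbTE hai x; rewrite /gen_act hai. Qed.

(* id, w_i and any other generator act as three pairwise different maps
   (the last fact needs 2 <> 0 in Z/mZ). *)
Lemma gen_act_self_neq_id : ~ gen_act i =1 id.
Proof. by move=> /(_ 0); rewrite /gen_act eqxx subr0 => /eqP; rewrite oner_eq0. Qed.

Lemma gen_act_neq_neq_id (a : 'I_n) : (2 < m)%N -> a != i -> ~ gen_act a =1 id.
Proof.
move=> hm2 hai /(_ 1); rewrite gen_act_neq // => /eqP.
rewrite eq_sym -addr_eq0 -mulr2n => /eqP /(congr1 (@nat_of_ord _)).
by rewrite val_Zp_nat ?modn_small // ltnW.
Qed.

Lemma gen_act_self_neq (a : 'I_n) : a != i -> ~ gen_act i =1 gen_act a.
Proof.
move=> hai /(_ 0); rewrite (gen_act_neq hai) /gen_act eqxx subr0 oppr0 => /eqP.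
by rewrite oner_eq0.
Qed.

Lemma Wj_act_sign (j : 'I_n) (y : seq 'I_n) : j != i ->
  all (fun a : 'I_n => (val a == 0)%N || (a == j)) y -> is_sign (word_act y).
Proof.
move=> hji; elim: y => [|a y IH] /=; first by left.
move=> /andP [ha /IH IHy].
have hai : a != i.
  by apply: contraTneq ha => ->; rewrite negb_or -lt0n hi eq_sym.
case: IHy => H; [right|left] => x; rewrite /= gen_act_neq // H ?opprK //.
Qed.

Section Relators.
Variables (ms ks : seq nat).
Hypotheses (hm : m = tcox ms ks i) (hm1 : (1 < m)%N).

(* Relators act trivially: (w_1 w_i)^(t_i) acts as x |-> x - t_i = x. *)
Lemma relator_act (r : seq 'I_n) : is_relator ms ks r -> word_act r =1 id.
Proof.
move=> [[s ->]|[s0 [k [h0 [hk ->]]]]] x /=; first exact: gen_actK.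
have hs0 : s0 != i by apply/eqP => e; move: hi; rewrite -e h0.
have power t : word_act (flatten (nseq t [:: s0; k])) x =
               if k == i then x - t%:R else x.
  elim: t => [|t IHt] /=; first by case: (k == i); rewrite ?subr0.
  rewrite IHt gen_act_neq // /gen_act; case: (k == i).
    by rewrite opprB -natr1 opprD addrA.
  by rewrite opprK.
rewrite power; case: eqP => // ->.
by rewrite -/(tcox ms ks i) -hm pchar_Zp // subr0.
Qed.

Lemma coxeq_act (u v : seq 'I_n) : coxeq ms ks u v -> word_act u =1 word_act v.
Proof.
elim=> {u v} [u x|u v _ H x|u v w _ H1 _ H2 x|u v r hr x].
- by [].
- by rewrite H.
- by rewrite H1 H2.
- by rewrite !word_act_cat (relator_act hr).
Qed.

Lemma conj_gen_sign (j : 'I_n) (g : seq 'I_n) (a : 'I_n) : j != i ->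
  (forall x, inWi ms ks j x <-> inWi ms ks i (rev g ++ x ++ g)) ->
  (val a == 0)%N || (a == i) ->
  is_sign (fun x => word_act g (gen_act a (word_act (rev g) x))).
Proof.
move=> hji Hg ha.
have conj_in_Wi : inWi ms ks i (rev g ++ (g ++ [:: a] ++ rev g) ++ g).
  apply: (@inWi_coxeq _ _ _ _ [:: a]).
    by exists [:: a]; split; [rewrite /= ha | exact: coxeq_refl].
  rewrite -!catA.
  apply: coxeq_trans (cancel_rev ms ks g [::] ([:: a] ++ rev g ++ g)) _.
  by have := cancel_rev ms ks g [:: a] [::]; rewrite cats0.
have [y [hy hc]] := (Hg _).2 conj_in_Wi.
have [H|H] := Wj_act_sign hji hy; [left|right] => x;
  by have := coxeq_act hc x; rewrite !word_act_cat /= H.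
Qed.

End Relators.
End Action.
Arguments gen_act m {n} i a x.
Arguments word_act m {n} i w x.

Theorem lemma3p4 (n : nat) (ms ks : seq nat)
  (hn : 3 <= n)
  (hsize : size ks = size ms)
  (huniq : uniq ms)
  (hms : all (fun m => odd m && (3 <= m)) ms)
  (hks : all (fun k => 0 < k) ks)
  (hsum : sumn ks = n - 1)
  (i j : 'I_n) (hi : 0 < val i) (hj : 0 < val j) (hij : i != j) :
  ~ Wconj ms ks i j.
Proof.
move=> [g Hg].
set m := tcox ms ks i.
have hm2 : 2 < m by apply: tcox_gt2.
have hji : j != i by rewrite eq_sym.
pose w1 : 'I_n := Ordinal (leq_trans (isT : 0 < 3) hn).
have hw1 : w1 != i by rewrite -val_eqE /= eq_sym -lt0n.
have sign a : (val a == 0) || (a == i) ->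
    is_sign (fun x => word_act m i g (gen_act m i a (word_act m i (rev g) x))).
  by move=> ha; exact: (conj_gen_sign hi erefl (ltnW hm2) hji Hg ha).
(* Conjugation by g is injective and fixes id: w_i, w_1 cannot go to id,
   nor both to -id. *)
have unconj := conj_inj (@word_act_revK m _ i g).
have gen_i : (val i == 0) || (i == i) by rewrite eqxx orbT.
have [conj_wi|conj_wi] := sign i gen_i.
  by apply: (gen_act_self_neq_id (i:=i)); apply: unconj => x; rewrite conj_wi word_actK.
have [conj_w1|conj_w1] := sign w1 (eqxx 0).
  by apply: (gen_act_neq_neq_id hm2 hw1); apply: unconj => x; rewrite conj_w1 word_actK.
by apply: (gen_act_self_neq hw1); apply: unconj => x; rewrite conj_wi conj_w1.
Qed.
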